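(* Let $X$ be a CAT(0) space, $T_n:X\to X$ for $n\in\mathbb{N}$, and $(\gamma_n)$ a sequence of positive reals such that $(T_n)$ is jointly $(P_2)$ with respect to $(\gamma_n)$. Then for all $m,n\in\mathbb{N}$ and all $w\in X$, $d(T_nw,T_mw)\le\frac{|\gamma_n-\gamma_m|}{\gamma_n}d(w,T_nw)$.
   Context: A geodesic space $(X,d)$ is CAT(0) if for all $z\in X$, all geodesics $\gamma:[a,b]\to X$ and all $t\in[0,1]$, $d^2(z,\gamma((1-t)a+tb))\le(1-t)d^2(z,\gamma(a))+td^2(z,\gamma(b))-t(1-t)d^2(\gamma(a),\gamma(b))$. The family $(T_n)$ is jointly $(P_2)$ with respect to $(\gamma_n)$ if for all $n,m\in\mathbb{N}$ and $x,y\in X$, $\frac1{\gamma_m}\big(d^2(T_nx,T_my)+d^2(y,T_my)-d^2(y,T_nx)\big)\le\frac1{\gamma_n}\big(d^2(x,T_my)-d^2(x,T_nx)-d^2(T_nx,T_my)\big)$. *)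

From Stdlib Require Import Reals.
Open Scope R_scope.

Definition is_metric {X : Type} (d : X -> X -> R) : Prop :=
  (forall x y, 0 <= d x y) /\
  (forall x y, d x y = 0 <-> x = y) /\
  (forall x y, d x y = d y x) /\
  (forall x y z, d x z <= d x y + d y z).

(* g : [a,b] -> X is a geodesic (isometric embedding of the interval [a,b]).
   Represented as a total function R -> X, only its values on [a,b] matter. *)
Definition is_geodesic {X : Type} (d : X -> X -> R) (a b : R) (g : R -> X) : Prop :=
  a <= b /\
  forall s t, a <= s <= b -> a <= t <= b -> d (g s) (g t) = Rabs (s - t).

Definition geodesic_space {X : Type} (d : X -> X -> R) : Prop :=
  is_metric d /\
  forall x y, exists g : R -> X,
    is_geodesic d 0 (d x y) g /\ g 0 = x /\ g (d x y) = y.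

Definition CAT0 {X : Type} (d : X -> X -> R) : Prop :=
  geodesic_space d /\
  forall (z : X) (a b : R) (g : R -> X) (t : R),
    is_geodesic d a b g -> 0 <= t <= 1 ->
    (d z (g ((1 - t) * a + t * b)))^2 <=
      (1 - t) * (d z (g a))^2 + t * (d z (g b))^2
      - t * (1 - t) * (d (g a) (g b))^2.

Definition jointly_P2 {X : Type} (d : X -> X -> R)
    (T : nat -> X -> X) (gamma : nat -> R) : Prop :=
  forall (n m : nat) (x y : X),
    / gamma m * ((d (T n x) (T m y))^2 + (d y (T m y))^2 - (d y (T n x))^2)
    <= / gamma n * ((d x (T m y))^2 - (d x (T n x))^2 - (d (T n x) (T m y))^2).

From Stdlib Require Import Reals Lra Psatz.
Open Scope R_scope.

(* Put [a = d(w, T_n w)], [b = d(w, T_m w)], [c = d(T_n w, T_m w)].  Property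
   (P_2) at [x = y = w], with denominators cleared, reads
   [(γ_n + γ_m) c^2 <= (γ_m - γ_n) (b^2 - a^2)].  By the triangle inequality
   [b^2] lies between [(a - c)^2] and [(a + c)^2]; using the upper bound when
   [γ_n <= γ_m] and the lower one otherwise gives [γ_n c^2 <= |γ_n - γ_m| a c].
   Only the metric structure of a CAT(0) space is needed. *)

Lemma metric_sq_triangle {X : Type} (d : X -> X -> R) :
  is_metric d -> forall x y z,
    (d x y - d y z)^2 <= (d x z)^2 <= (d x y + d y z)^2.
Proof.
  intros [Hpos [_ [Hsym Htri]]] x y z.
  pose proof (Hpos x y); pose proof (Hpos y z); pose proof (Hpos x z).
  pose proof (Htri x y z); pose proof (Htri x z y); pose proof (Htri y x z).
  rewrite (Hsym z y), (Hsym y x) in *.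
  split; nra.
Qed.

Lemma Rinv_mult_le_cross (p q u v : R) :
  0 < p -> 0 < q -> / q * u <= / p * v -> p * u <= q * v.
Proof.
  intros Hp Hq H.
  apply Rmult_le_compat_l with (r := p * q) in H; [|nra].
  replace (p * q * (/ q * u)) with (p * u) in H by (field; lra).
  replace (p * q * (/ p * v)) with (q * v) in H by (field; lra).
  exact H.
Qed.

Lemma Rmult_le_reg_r_nonneg (u v c : R) :
  0 <= c -> 0 <= v -> u * c * c <= v * c -> u * c <= v.
Proof.
  intros Hc Hv H.
  destruct (Req_dec c 0) as [->|Hc0]; [lra|].
  apply Rmult_le_reg_r with c; lra.
Qed.

Lemma P2_diagonal_bound (p q a b c : R) :
  0 < p -> 0 < q -> 0 <= a -> 0 <= c ->
  (a - c)^2 <= b^2 <= (a + c)^2 ->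
  p * (c^2 + b^2 - a^2) <= q * (b^2 - a^2 - c^2) ->
  c <= Rabs (p - q) / p * a.
Proof.
  intros Hp Hq Ha Hc [Hlow Hup] HP2.
  enough (Hpc : p * c <= Rabs (p - q) * a).
  { apply Rmult_le_reg_l with p; [lra|].
    replace (p * (Rabs (p - q) / p * a)) with (Rabs (p - q) * a)
      by (field; lra).
    exact Hpc. }
  apply Rmult_le_reg_r_nonneg; [exact Hc | pose proof (Rabs_pos (p - q)); nra |].
  destruct (Rle_or_lt p q) as [Hpq|Hqp].
  - rewrite Rabs_left1 by lra. nra.
  - rewrite Rabs_right by lra. nra.
Qed.

Theorem proposition3p10 (X : Type) (d : X -> X -> R) (T : nat -> X -> X)
    (gamma : nat -> R) :
  CAT0 d ->
  (forall n, 0 < gamma n) ->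
  jointly_P2 d T gamma ->
  forall (m n : nat) (w : X),
    d (T n w) (T m w) <= Rabs (gamma n - gamma m) / gamma n * d w (T n w).
Proof.
  intros [[Hmetric _] _] Hg HP m n w.
  apply P2_diagonal_bound with (b := d w (T m w)).
  - apply Hg.
  - apply Hg.
  - apply Hmetric.
  - apply Hmetric.
  - apply metric_sq_triangle, Hmetric.
  - apply Rinv_mult_le_cross; [apply Hg | apply Hg | exact (HP n m w w)].
Qed.
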